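(* In the setting described in the context, assume that $q=p^h$ is a square, that $t$ is a prime divisor of $q^2+q+1$, and that $p \bmod t$ is a generator of the multiplicative group of $\mathbb{Z}_t$. Then $t$ divides either $q+\sqrt q+1$ or $q-\sqrt q+1$, and there is $\varepsilon\in\{1,-1\}$ such that $$w_1=w_2=\dots=w_{t-1}=\frac{q+1+\varepsilon\sqrt q}{t},\qquad w_0=\frac{q+1+\varepsilon(1-t)\sqrt q}{t}.$$
   Context: Let $q=p^h$ with $p$ prime, $h\ge1$. Let $\alpha$ be a primitive element of $\mathbb{F}_{q^3}$; the points of $PG(2,q)$ are the 1-dimensional $\mathbb{F}_q$-subspaces of $\mathbb{F}_{q^3}$, and $P_i$ denotes the point represented by $\alpha^i$, so $PG(2,q)=\{P_0,\dots,P_{q^2+q}\}$. Let $\tau:P_i\mapsto P_{ip\bmod(q^2+q+1)}$ (a collineation) and let $\ell_0$ be a line of $PG(2,q)$ fixed by $\tau$. Let $t$ be a positive divisor of $q^2+q+1$ and for $i=0,\dots,t-1$ let $O_i=\{P_u:u\equiv i\pmod t\}$. For $u=0,\dots,t-1$ let $w_u=|\ell_0\cap O_u|$. *)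

From mathcomp Require Import all_boot all_order all_algebra all_field.
Set Implicit Arguments. Unset Strict Implicit. Unset Printing Implicit Defensive.
Import GRing.Theory.
Local Open Scope ring_scope.

Definition subFq (L : finFieldType) (q : nat) : {set L} :=
  [set x : L | x ^+ q == x].

(* V is a 2-dimensional F_q-subspace of L (a line of PG(2,q) when
   #|L| = q^3): closed under addition and under scaling by F_q,
   and of cardinality q^2. *)
Definition is_Fq_plane (L : finFieldType) (q : nat) (V : {set L}) : Prop :=
  [/\ (0 : L) \in V,
      (forall x y, x \in V -> y \in V -> x + y \in V),
      (forall c x, c \in subFq L q -> x \in V -> c * x \in V)
    & #|V| = (q ^ 2)%N].

(* P_i lies on the line represented by V iff alpha^i \in V.
   The line is fixed by tau : P_i |-> P_{ip mod (q^2+q+1)}. *)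
Definition tau_fixed (L : finFieldType) (q p : nat) (alpha : L) (V : {set L}) :=
  forall i : nat, (i < q ^ 2 + q + 1)%N ->
    (alpha ^+ i \in V) = (alpha ^+ ((i * p) %% (q ^ 2 + q + 1)) \in V).

(* w_u = |ell_0 cap O_u|, O_u = {P_i : i = u mod t}, P_0..P_{q^2+q} *)
Definition w_count (L : finFieldType) (q t : nat) (alpha : L) (V : {set L})
    (u : nat) : nat :=
  #|[set i : 'I_(q ^ 2 + q + 1) | ((i %% t)%N == u) && (alpha ^+ i \in V)]|.

From mathcomp Require Import all_boot all_order all_algebra all_field.
From mathcomp Require Import zify ring.
Set Implicit Arguments. Unset Strict Implicit. Unset Printing Implicit Defensive.
Import GRing.Theory.

(* The exponents i (mod N = q^2+q+1) with alpha^i on ell_0 form a Singer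
   difference set: there are q+1 of them, and every nonzero x mod N is the
   difference of exactly one pair of them.  At most one, because two such pairs
   would give ell_0 and alpha^-x ell_0 two F_q-independent common points, so the
   two lines coincide and the indicator of ell_0 has period x, which is
   impossible since gcd(N, q+1) = 1; exactly one by counting all (q+1)^2 pairs.
   Invariance under tau makes the set stable under multiplication by p, and as p
   generates (Z/t)^* all w_u with u <> 0 equal a common value w.  Counting
   points gives w_0 + (t-1) w = q+1, counting pairs whose difference is
   divisible by t gives w_0^2 + (t-1) w^2 = q + N/t, and eliminating w_0 yields
   (t w - q - 1)^2 = q. *)

Definition count_lt (n : nat) (P : nat -> bool) : nat := \sum_(0 <= i < n) (P i : nat).

Lemma count_ltE n (P : nat -> bool) : count_lt n P = #|[set i : 'I_n | P i]|.
Proof.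
rewrite /count_lt big_mkord -sum1_card [RHS]big_mkcond /=.
by apply: eq_bigr => i _; rewrite inE; case: (P i).
Qed.

Section PeriodicSums.
Variables (T : Type) (F : nat -> T) (g : nat).
Hypothesis Fg : forall i, F (i + g) = F i.

Lemma periodic_mul m i : F (i + g * m) = F i.
Proof. by elim: m i => [|m IHm] i; rewrite ?muln0 ?addn0 // mulnS addnA IHm Fg. Qed.

End PeriodicSums.

Section PeriodicNatSums.
Variables (F : nat -> nat) (g : nat).
Hypothesis Fg : forall i, F (i + g) = F i.

Lemma sum_periodic m : \sum_(0 <= i < g * m) F i = m * \sum_(0 <= i < g) F i.
Proof.
elim: m => [|m IHm]; first by rewrite muln0 big_geq.
rewrite mulnS addnC (big_cat_nat (n := g * m)) ?leq_addr //= IHm.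
rewrite -{1}[g * m]add0n big_addn addKn mulSn addnC; congr (_ + _).
by apply: eq_bigr => i _; rewrite periodic_mul.
Qed.

Lemma sum_periodic_shift i : \sum_(0 <= x < g) F (i + x) = \sum_(0 <= x < g) F x.
Proof.
elim: i => [|i IHi] //; case: g Fg IHi => [|n] Fn IHi; first by rewrite !big_geq.
rewrite -IHi (big_nat_recr n) // (big_nat_recl n) //= addnC.
congr (_ + _); last by apply: eq_bigr => j _; rewrite addSnnS.
by rewrite addSnnS Fn addn0.
Qed.

End PeriodicNatSums.

Lemma count_lt_period (P : nat -> bool) N x : 0 < x < N ->
  (forall i, P (i + N) = P i) -> (forall i, P (i + x) = P i) ->
  ~~ coprime N (count_lt N P).
Proof.
move=> /andP[x_gt0 xN] PN Px; apply/negP => copN.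
have N_gt0 : 0 < N by apply: leq_trans xN.
set g := gcdn N x.
have Pg i : P (i + g) = P i.
  have [a _ /dvdnP[k Hk]] := Bezoutl x N_gt0.
  by rewrite -(periodic_mul Px a) -addnA (mulnC x) Hk mulnC periodic_mul.
have defN : N = g * (N %/ g) by rewrite mulnC divnK ?dvdn_gcdl.
have countN : count_lt N P = N %/ g * count_lt g P.
  by rewrite /count_lt {1}defN (sum_periodic (F := fun i => P i : nat)) // => i; rewrite Pg.
have : N %/ g %| 1.
  by rewrite -(eqP copN) dvdn_gcd countN dvdn_mulr // {2}defN dvdn_mull.
rewrite dvdn1 => /eqP Ng1; rewrite Ng1 muln1 in defN.
have : g <= x by rewrite dvdn_leq ?dvdn_gcdr.
by rewrite -defN leqNgt xN.
Qed.

Lemma sum_eq_andb k t (b : bool) : k < t -> \sum_(0 <= u < t) ((k == u) && b : nat) = b.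
Proof.
move=> kt; rewrite (bigD1_seq k) ?mem_index_iota ?iota_uniq //= eqxx.
by rewrite big1 ?addn0 // => u; rewrite eq_sym => /negbTE ->.
Qed.

Definition residue_count N t (P : nat -> bool) u :=
  count_lt N (fun i => (i %% t == u) && P i).

Definition autocorr N (P : nat -> bool) x := count_lt N (fun i => P i && P (i + x)).

Section ResidueCounts.
Variables (P : nat -> bool) (N t : nat).
Hypotheses (PN : forall i, P (i + N) = P i) (tN : t %| N) (t_gt0 : 0 < t).
Local Notation c := (residue_count N t P).
Local Notation D := (autocorr N P).

Lemma sum_residue_count : \sum_(0 <= u < t) c u = count_lt N P.
Proof.
rewrite /residue_count /count_lt exchange_big_nat; apply: eq_bigr => i _.
by rewrite sum_eq_andb // ltn_pmod.
Qed.

Lemma sum_sqr_residue_count :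
  \sum_(0 <= u < t) c u * c u = \sum_(0 <= x < N) (t %| x) * D x.
Proof.
have sqrE u : c u * c u = \sum_(0 <= i < N) \sum_(0 <= j < N)
    (((i %% t == u) && P i) && ((j %% t == u) && P j) : nat).
  rewrite /residue_count /count_lt big_distrl /=; apply: eq_bigr => i _.
  by rewrite big_distrr /=; apply: eq_bigr => j _; rewrite mulnb.
rewrite (eq_bigr _ (fun u _ => sqrE u)) exchange_big_nat.
rewrite [RHS](eq_bigr (fun x => \sum_(0 <= i < N) (t %| x) * (P i && P (i + x)))); last first.
  by move=> x _; rewrite /autocorr /count_lt big_distrr.
rewrite [RHS]exchange_big_nat; apply: eq_bigr => i _.
pose Fi j := (P i && P j) && (j %% t == i %% t).
have Fi_per j : (Fi (j + N) : nat) = Fi j by rewrite /Fi PN -modnDmr (eqP tN) addn0.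
transitivity (\sum_(0 <= j < N) (Fi j : nat)).
  rewrite exchange_big_nat; apply: eq_bigr => j _.
  rewrite -(sum_eq_andb (Fi j) (ltn_pmod i t_gt0)); apply: eq_bigr => u _.
  by rewrite /Fi; case: eqP => [<-|] //=; case: (P i); case: (P j); case: eqP.
rewrite -(sum_periodic_shift (F := fun j => Fi j : nat) Fi_per i); apply: eq_bigr => x _.
rewrite /Fi -[X in _ == X %[mod t]]addn0 eqn_modDl mod0n.
by rewrite mulnb [in RHS]andbC.
Qed.

Lemma autocorr0 : D 0 = count_lt N P.
Proof. by apply: eq_bigr => i _; rewrite addn0 andbb. Qed.

Lemma sum_autocorr : \sum_(0 <= x < N) D x = count_lt N P * count_lt N P.
Proof.
have PN' j : (P (j + N) : nat) = P j by rewrite PN.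
rewrite /autocorr /count_lt exchange_big_nat big_distrl; apply: eq_bigr => i _.
rewrite -(sum_periodic_shift PN' i) big_distrr /=.
by apply: eq_bigr => x _; rewrite mulnb.
Qed.

Lemma sum_dvdn_lt : \sum_(0 <= x < N) (t %| x : nat) = N %/ t.
Proof.
have dvd_per x : (t %| x + t : nat) = (t %| x) by rewrite dvdn_addl.
rewrite -{1}(divnK tN) mulnC (sum_periodic dvd_per).
rewrite big_ltn //= dvdn0 big_nat_cond big1 ?muln1 // => x /andP[/andP[x_gt0 xt] _].
by apply/eqP; rewrite eqb0; apply/negP => /(dvdn_leq x_gt0); rewrite leqNgt xt.
Qed.

End ResidueCounts.

Local Open Scope ring_scope.

Lemma natr_Fp_eq t m n : prime t -> (m%:R : 'F_t) = n%:R -> m = n %[mod t].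
Proof.
move=> t_pr; wlog nm : m n / (n <= m)%N => [wlog_nm|].
  by case: (leqP n m) => [|/ltnW] nm Emn; [apply: wlog_nm | symmetry; apply: wlog_nm].
move/eqP; rewrite -subr_eq0 -natrB // -(dvdn_pcharf (pchar_Fp t_pr)).
by rewrite -eqn_mod_dvd // => /eqP.
Qed.

Section FrobeniusSubfield.
Variables (L : finFieldType) (p h q : nat).
Hypotheses (pcharL : p \in [pchar L]) (qE : q = (p ^ h)%N).
Local Notation K := (subFq L q).

Lemma exprD_pchar_pow (x y : L) : (x + y) ^+ q = x ^+ q + y ^+ q.
Proof.
apply: exprDn_pchar; rewrite qE pnatX; apply/orP; left.
by rewrite pnatE ?(pcharf_prime pcharL) // (pcharf_eq pcharL) inE.
Qed.

Lemma subFq0 : 0 \in K.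
Proof. by rewrite inE expr0n qE eqn0Ngt expn_gt0 prime_gt0 ?(pcharf_prime pcharL). Qed.

Lemma subFqB x y : x \in K -> y \in K -> x - y \in K.
Proof.
rewrite !inE => /eqP xq /eqP yq; apply/eqP.
by apply: (addIr (y ^+ q)); rewrite -exprD_pchar_pow subrK xq yq subrK.
Qed.

Lemma subFqM x y : x \in K -> y \in K -> x * y \in K.
Proof. by rewrite !inE exprMn => /eqP-> /eqP->. Qed.

Lemma subFqV x : x \in K -> x^-1 \in K.
Proof. by rewrite !inE exprVn => /eqP->. Qed.

Lemma Fq_plane_span (V : {set L}) a b : is_Fq_plane q V -> (q <= #|K|)%N ->
  a \in V -> b \in V -> b != 0 -> (forall c, c \in K -> a != c * b) ->
  V = [set c.1 * a + c.2 * b | c in setX K K].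
Proof.
case=> _ VD VZ cardV cardK aV bV b_neq0 a_indep.
have span_inj : {in setX K K &, injective (fun c : L * L => c.1 * a + c.2 * b)}.
  move=> [c1 d1] [c2 d2]; rewrite !in_setX /= => /andP[c1K d1K] /andP[c2K d2K] E.
  have [e12|c12] := eqVneq c1 c2.
    by move: E; rewrite e12 => /addrI /(mulIf b_neq0) ->.
  have E' : (c1 - c2) * a = (d2 - d1) * b.
    apply/eqP; rewrite -subr_eq0; apply/eqP.
    by transitivity ((c1 * a + d1 * b) - (c2 * a + d2 * b)); [ring | rewrite E subrr].
  have Ea : a = ((c1 - c2)^-1 * (d2 - d1)) * b by rewrite -mulrA -E' mulKf ?subr_eq0.
  by move: (a_indep _ (subFqM (subFqV (subFqB c1K c2K)) (subFqB d2K d1K))); rewrite -Ea eqxx.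
apply/eqP; rewrite eq_sym eqEcard; apply/andP; split.
  apply/subsetP => x /imsetP[[c d]]; rewrite in_setX /= => /andP[cK dK] ->.
  by apply: VD; apply: VZ.
by rewrite card_in_imset // cardsX cardV expnS expn1 leq_mul.
Qed.

End FrobeniusSubfield.

Lemma is_Fq_plane_mul (L : finFieldType) q (V : {set L}) a : a != 0 ->
  is_Fq_plane q V -> is_Fq_plane q [set v | a * v \in V].
Proof.
move=> a_neq0 [V0 VD VZ cardV]; split.
- by rewrite inE mulr0.
- by move=> x y; rewrite !inE mulrDr; apply: VD.
- by move=> c x cK; rewrite !inE mulrCA; apply: VZ.
rewrite -cardV -(card_preimset V (mulfI a_neq0)).
by apply: eq_card => v; rewrite !inE.
Qed.

Section SingerLine.
Variables (L : finFieldType) (p h q : nat) (alpha : L).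
Hypotheses (p_pr : prime p) (h_gt0 : (0 < h)%N) (qE : q = (p ^ h)%N)
  (cardL : #|L| = (q ^ 3)%N) (alpha_prim : (#|L|.-1).-primitive_root alpha).
Local Notation N := (q ^ 2 + q + 1)%N.
Local Notation K := (subFq L q).

Lemma q_gt1 : (1 < q)%N.
Proof. by rewrite qE -(expn0 p) ltn_exp2l ?prime_gt1. Qed.

Lemma pcharL : p \in [pchar L].
Proof. by apply: (@card_finPcharP _ p (h * 3)); rewrite // cardL qE expnM. Qed.

Lemma predn_cardL : (#|L|.-1 = N * q.-1)%N.
Proof. by rewrite cardL; case: q q_gt1 => // r _ /=; nia. Qed.

Lemma alpha_neq0 : alpha != 0.
Proof.
have n_gt0 : (0 < N * q.-1)%N by rewrite muln_gt0 addn1 -subn1 subn_gt0 q_gt1.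
apply/eqP => alpha0; have := prim_expr_order alpha_prim.
by rewrite alpha0 expr0n predn_cardL eqn0Ngt n_gt0 => /eqP; rewrite eq_sym oner_eq0.
Qed.

Lemma eq_expr_alpha i j : (alpha ^+ i == alpha ^+ j) = (i == j %[mod N * q.-1]).
Proof. by rewrite (eq_prim_root_expr alpha_prim) predn_cardL. Qed.

Lemma expr_alpha_subFq k : alpha ^+ (N * k) \in K.
Proof.
rewrite inE -exprM eq_expr_alpha; apply/eqP; case: q q_gt1 => // r _ /=.
by rewrite mulnS addnC -mulnA (mulnC k r) mulnA (mulnC (_ * r)%N) modnMDl.
Qed.

Lemma subFq_card_ge : (q <= #|K|)%N.
Proof.
pose S := [set alpha ^+ (N * k) | k : 'I_q.-1].
have S_sub : S \subset K :\ 0.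
  apply/subsetP => _ /imsetP[k _ ->].
  by rewrite in_setD1 expr_alpha_subFq expf_neq0 // alpha_neq0.
have cardS : #|S| = q.-1.
  rewrite card_imset ?card_ord // => i j /eqP; rewrite eq_expr_alpha.
  rewrite !(mulnC N) -!muln_modl eqn_pmul2r ?addn1 // !modn_small //.
  by move/eqP/val_inj.
have := subset_leq_card S_sub; rewrite cardS (cardsD1 0 K) (subFq0 pcharL qE) add1n.
by case: q q_gt1.
Qed.

Lemma expr_alpha_Fq_indep i j c : (i < N)%N -> (j < N)%N -> i != j -> c \in K ->
  alpha ^+ i != c * alpha ^+ j.
Proof.
move=> iN jN ij /[1!inE] /eqP cq; apply/negP => /eqP Eij.
have c_neq0 : c != 0.
  apply/eqP => c0; move/eqP: Eij; rewrite c0 mul0r expf_eq0 (negbTE alpha_neq0).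
  by rewrite andbF.
have c_unit : c ^+ q.-1 = 1.
  by apply: (mulIf c_neq0); rewrite mul1r -exprSr prednK ?cq // ltnW ?q_gt1.
have : alpha ^+ (i * q.-1) == alpha ^+ (j * q.-1) by rewrite !exprM Eij exprMn c_unit mul1r.
rewrite eq_expr_alpha -!muln_modl eqn_pmul2r; last by rewrite -subn1 subn_gt0 q_gt1.
by rewrite !modn_small // (negbTE ij).
Qed.

Variable V : {set L}.
Hypothesis V_plane : is_Fq_plane q V.
Local Notation P := (fun i : nat => alpha ^+ i \in V).

Lemma line_periodic i : P (i + N)%N = P i.
Proof.
case: V_plane => _ _ VZ _ /=; have alphaN := prim_expr_order alpha_prim.
rewrite predn_cardL in alphaN; apply/idP/idP => Vi.
  have := VZ _ _ (expr_alpha_subFq q.-2) Vi; rewrite -exprD.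
  rewrite (_ : N * q.-2 + (i + N) = i + N * q.-1)%N ?exprD ?alphaN ?mulr1 //.
  by case: q q_gt1 => // [[|r]] //= _; ring.
by have := VZ _ _ (expr_alpha_subFq 1) Vi; rewrite -exprD muln1 addnC.
Qed.

Lemma count_line_units : count_lt #|L|.-1 P = (q ^ 2).-1.
Proof.
rewrite count_ltE; case: V_plane => V0 _ _ <-; rewrite (cardsD1 0 V) V0 /=.
pose f (i : 'I_#|L|.-1) := alpha ^+ i.
have f_inj : injective f.
  move=> i j /eqP; rewrite /f eq_expr_alpha -predn_cardL !modn_small //.
  by move/eqP/val_inj.
rewrite -(card_imset _ f_inj); apply: eq_card => x; rewrite in_setD1.
apply/imsetP/andP => [[i /[1!inE] Vi ->]|[x_neq0 Vx]].
  by rewrite expf_neq0 ?alpha_neq0.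
have x_unit : x ^+ #|L|.-1 = 1.
  apply: (mulIf x_neq0); rewrite mul1r -exprSr prednK ?expf_card //.
  by apply/card_gt0P; exists 0.
by have [i xi] := prim_rootP alpha_prim x_unit; exists i; rewrite ?inE /f -xi.
Qed.

Lemma count_line : count_lt N P = (q + 1)%N.
Proof.
have := count_line_units; rewrite predn_cardL /count_lt.
rewrite (sum_periodic (F := fun i => P i : nat)) => [|i]; last by rewrite line_periodic.
have q1_gt0 : (0 < q.-1)%N by rewrite -subn1 subn_gt0 q_gt1.
move=> E; apply/eqP; rewrite -(eqn_pmul2l q1_gt0) E.
by apply/eqP; case: q q_gt1 => // r _ /=; nia.
Qed.

Lemma line_autocorr_le1 x : (0 < x < N)%N -> (autocorr N P x <= 1)%N.
Proof.
move=> xN; rewrite leqNgt /autocorr count_ltE; apply/negP => /card_gt1P[i [j]].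
rewrite !inE => -[/andP[Vi Vix] /andP[Vj Vjx] ij].
have alphax_neq0 : alpha ^+ x != 0 by rewrite expf_neq0 ?alpha_neq0.
set V' := [set v | alpha ^+ x * v \in V].
have V'_plane := is_Fq_plane_mul alphax_neq0 V_plane.
have V'E : V' = V.
  have Vx k : (alpha ^+ k \in V') = (alpha ^+ (k + x) \in V) by rewrite inE -exprD addnC.
  have span := Fq_plane_span pcharL qE _ subFq_card_ge _ _ (expf_neq0 j alpha_neq0)
    (fun c => expr_alpha_Fq_indep (ltn_ord i) (ltn_ord j) ij (c := c)).
  by rewrite (span V') ?Vx // (span V).
have V_shift k : P (k + x)%N = P k by rewrite /= -[in RHS]V'E inE -exprD addnC.
have := count_lt_period xN line_periodic V_shift; rewrite count_line.
rewrite (_ : N = (q * (q + 1)).+1)%N; last by rewrite -addn1; ring.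
by rewrite (coprime_dvdr (dvdn_mull q (dvdnn (q + 1))) (coprimeSn _)).
Qed.

Lemma line_autocorr x : (0 < x < N)%N -> autocorr N P x = 1%N.
Proof.
move=> xN; apply/eqP; rewrite eqn_leq line_autocorr_le1 //=.
have sum_nonzero : (\sum_(1 <= y < N) autocorr N P y = q * (q + 1))%N.
  have := sum_autocorr line_periodic; rewrite big_ltn; last by rewrite addn1.
  rewrite autocorr0 count_line.
  by move/eqP; rewrite (_ : (q + 1) * (q + 1) = (q + 1) + q * (q + 1))%N ?eqn_add2l => [/eqP|]; last ring.
have : (\sum_(1 <= y < N) (1 - autocorr N P y) = 0)%N.
  apply/eqP; rewrite -(eqn_add2r (\sum_(1 <= y < N) autocorr N P y)) -big_split /=.
  rewrite (eq_big_nat _ _ (F2 := fun _ => 1%N)) => [|y /andP[y_gt0 yN]]; last first.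
    by rewrite subnK // line_autocorr_le1 // y_gt0.
  by rewrite sum_nat_const_nat sum_nonzero muln1 add0n addn1 subn1 /=; apply/eqP; ring.
move/eqP; rewrite big_seq sum_nat_seq_eq0 => /allP /(_ x).
have x_in : x \in index_iota 1 N by rewrite mem_index_iota.
by move=> /(_ x_in); rewrite x_in subn_eq0.
Qed.

Lemma sum_residue_count_line t : (0 < t)%N ->
  (\sum_(0 <= u < t) residue_count N t P u = q + 1)%N.
Proof. by move=> t_gt0; rewrite sum_residue_count // count_line. Qed.

Lemma sum_sqr_residue_count_line t : (t %| N)%N -> (0 < t)%N ->
  (\sum_(0 <= u < t) residue_count N t P u * residue_count N t P u = q + N %/ t)%N.
Proof.
have N_gt0 : (0 < N)%N by rewrite addn1.
move=> tN t_gt0; rewrite (sum_sqr_residue_count line_periodic tN t_gt0).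
rewrite -(sum_dvdn_lt tN t_gt0) [in LHS]big_ltn // [in RHS]big_ltn //.
rewrite dvdn0 mul1n autocorr0 count_line.
rewrite -addnA; congr (_ + (_ + _))%N.
by apply: eq_big_nat => x /andP[x_gt0 xN]; rewrite line_autocorr ?x_gt0 // muln1.
Qed.

End SingerLine.

Lemma mul_modn_inj n m i j : coprime n m -> (i < n)%N -> (j < n)%N ->
  (i * m = j * m %[mod n])%N -> i = j.
Proof.
move=> copnm; wlog ji : i j / (j <= i)%N => [wlog_ji|iN jN].
  by case: (leqP j i) => [|/ltnW] ij *; [apply: wlog_ji | symmetry; apply: wlog_ji].
move/eqP; rewrite eqn_mod_dvd ?leq_mul2r ?ji ?orbT // -mulnBl Gauss_dvdl //.
have [ij0|ij_gt0] := posnP (i - j); first by move=> _; lia.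
by move/(dvdn_leq ij_gt0); rewrite leqNgt (leq_ltn_trans (leq_subr j i) iN).
Qed.

Section MultiplierInvariance.
Variables (P : nat -> bool) (N t m : nat).
Hypotheses (Pm : forall i, (i < N)%N -> P i = P ((i * m) %% N))
  (copNm : coprime N m) (tN : (t %| N)%N) (t_pr : prime t)
  (m_gen : (t.-1).-primitive_root (m%:R : 'F_t)).
Local Notation c := (residue_count N t P).

Lemma residue_count_mul_le u : (c (u %% t) <= c (u * m %% t))%N.
Proof.
have [N0|N_gt0] := posnP N; first by rewrite /residue_count /count_lt N0 big_geq.
rewrite /residue_count !count_ltE.
pose g (i : 'I_N) : 'I_N := Ordinal (ltn_pmod (i * m) N_gt0).
have g_inj : injective g.
  by move=> i j /(congr1 val) /= /(mul_modn_inj copNm (ltn_ord i) (ltn_ord j)) /val_inj.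
rewrite -(card_imset _ g_inj); apply/subset_leq_card/subsetP => y /imsetP[i].
rewrite !inE => /andP[/eqP iu Pi] ->; rewrite /= -Pm // Pi andbT.
by rewrite modn_dvdm // -modnMml iu modnMml.
Qed.

Lemma residue_count_mulX_le u k : (c (u %% t) <= c (u * m ^ k %% t))%N.
Proof.
elim: k => [|k IHk]; first by rewrite muln1.
apply: leq_trans IHk _; rewrite -(modn_mod (u * m ^ k)).
by apply: leq_trans (residue_count_mul_le _) _; rewrite modnMml expnSr mulnA.
Qed.

Lemma residue_count_const u : (0 < u < t)%N -> c u = c 1.
Proof.
move=> /andP[u_gt0 ut]; have t_gt1 := prime_gt1 t_pr.
have uF_neq0 : (u%:R : 'F_t) != 0.
  by rewrite -(dvdn_pcharf (pchar_Fp t_pr)); apply: contraL ut => /(dvdn_leq u_gt0); rewrite leqNgt.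
have uF_unit : (u%:R : 'F_t) ^+ t.-1 = 1.
  apply: (mulIf uF_neq0); rewrite mul1r -exprSr prednK ?prime_gt0 //.
  by have := expf_card (u%:R : 'F_t); rewrite card_Fp.
have [k /esym] := prim_rootP m_gen uF_unit; rewrite -natrX => /(natr_Fp_eq t_pr).
rewrite (modn_small ut) => uE.
have mt1 : (m ^ t.-1 = 1 %[mod t])%N.
  by apply: natr_Fp_eq; rewrite // natrX (prim_expr_order m_gen).
apply/eqP; rewrite eqn_leq; apply/andP; split.
  have := residue_count_mulX_le (m ^ k) (t.-1 - k).
  by rewrite -expnD subnKC ?(ltnW (ltn_ord k)) // mt1 (modn_small t_gt1) -uE.
by have := residue_count_mulX_le 1 k; rewrite mul1n -uE (modn_small t_gt1).
Qed.

End MultiplierInvariance.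

Lemma sum_nat_const_residues (F : nat -> nat) t : (0 < t)%N ->
  (forall u, (0 < u < t)%N -> F u = F 1%N) ->
  (\sum_(0 <= u < t) F u = F 0%N + t.-1 * F 1%N)%N.
Proof.
move=> t_gt0 F_const; rewrite big_ltn // -subn1 -sum_nat_const_nat.
by congr (_ + _)%N; apply: eq_big_nat => u /andP[u_gt0 ut]; rewrite F_const ?u_gt0.
Qed.

Lemma weights_of_moments q s t M w0 w : (1 < t)%N -> q = (s ^ 2)%N ->
  (w0 + t.-1 * w = q + 1)%N -> (w0 * w0 + t.-1 * (w * w) = q + M)%N ->
  (M * t = q ^ 2 + q + 1)%N ->
  exists2 eps : int, eps = 1 \/ eps = -1 &
    t%:Z * w%:Z = q%:Z + 1 + eps * s%:Z /\
    t%:Z * w0%:Z = q%:Z + 1 + eps * (1 - t%:Z) * s%:Z.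
Proof.
move=> t_gt1 qs sum1 sum2 Mt.
have w0E : w0%:Z = q%:Z + 1 - (t%:Z - 1) * w%:Z by lia.
have sum2Z : w0%:Z * w0%:Z + (t%:Z - 1) * (w%:Z * w%:Z) = q%:Z + M%:Z by lia.
have MtZ : M%:Z * t%:Z = q%:Z * q%:Z + q%:Z + 1 by lia.
rewrite w0E in sum2Z; have := congr1 (fun z => t%:Z * z) sum2Z => /= sum2t.
have /eqP : (t%:Z - 1) * ((t%:Z * w%:Z - (q%:Z + 1)) ^+ 2 - s%:Z ^+ 2) = 0.
  by rewrite !expr2 (_ : s%:Z * s%:Z = q%:Z); lia.
rewrite mulf_eq0 (_ : (t%:Z - 1 == 0) = false) /=; last by apply/eqP; lia.
rewrite subr_sqr mulf_eq0 subr_eq0 addr_eq0.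
have w0t : t%:Z * w0%:Z = t%:Z * (q%:Z + 1) - (t%:Z - 1) * (t%:Z * w%:Z) by rewrite w0E; ring.
move=> tw_roots; have [eps eps1 Ew] : exists2 eps : int, eps = 1 \/ eps = -1 &
    t%:Z * w%:Z = q%:Z + 1 + eps * s%:Z.
  by case/orP: tw_roots => /eqP ea; [exists 1; [left | lia] | exists (-1); [right | lia]].
by exists eps => //; split=> //; rewrite w0t Ew; ring.
Qed.

Theorem proposition6 (p h q s t : nat) (L : finFieldType) (alpha : L)
    (V : {set L}) :
  prime p -> (0 < h)%N -> q = (p ^ h)%N ->
  #|L| = (q ^ 3)%N ->
  (#|L|.-1).-primitive_root alpha ->
  is_Fq_plane q V ->
  tau_fixed q p alpha V ->
  q = (s ^ 2)%N ->
  prime t -> (t %| q ^ 2 + q + 1)%N ->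
  (t.-1).-primitive_root (p%:R : 'F_t) ->
  ((t %| q + s + 1)%N \/ (t %| q - s + 1)%N) /\
  exists eps : int, (eps = 1 \/ eps = -1) /\
    (forall u : nat, (1 <= u <= t - 1)%N ->
       (t%:Z * (w_count q t alpha V u)%:Z = q%:Z + 1 + eps * s%:Z)) /\
    (t%:Z * (w_count q t alpha V 0)%:Z
       = q%:Z + 1 + eps * (1 - t%:Z) * s%:Z).
Proof.
move=> p_pr h_gt0 qE cardL alpha_prim V_plane tau qs t_pr tN p_gen.
have t_gt1 := prime_gt1 t_pr; have t_gt0 := ltnW t_gt1.
have copNp : coprime (q ^ 2 + q + 1) p.
  rewrite (_ : q ^ 2 + q + 1 = (q * (q + 1)).+1)%N; last by rewrite -addn1; ring.
  by rewrite (coprime_dvdr _ (coprimeSn _)) // qE -(prednK h_gt0) expnS -mulnA dvdn_mulr.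
pose c := residue_count (q ^ 2 + q + 1)%N t (fun i => alpha ^+ i \in V).
have c_const u : (0 < u < t)%N -> c u = c 1%N.
  exact: (residue_count_const (P := fun i => alpha ^+ i \in V) tau copNp tN t_pr p_gen).
have sum1 : (c 0 + t.-1 * c 1 = q + 1)%N.
  rewrite -sum_nat_const_residues // /c.
  exact: (sum_residue_count_line p_pr h_gt0 qE cardL alpha_prim V_plane t_gt0).
have sum2 : (c 0 * c 0 + t.-1 * (c 1 * c 1) = q + (q ^ 2 + q + 1) %/ t)%N.
  rewrite -(sum_nat_const_residues (F := fun u => c u * c u)) //; last by move=> u /c_const ->.
  exact: (sum_sqr_residue_count_line p_pr h_gt0 qE cardL alpha_prim V_plane tN t_gt0).
have [eps eps1 [Ew Ew0]] := weights_of_moments t_gt1 qs sum1 sum2 (divnK tN).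
have wE u : w_count q t alpha V u = c u by rewrite /c /residue_count count_ltE.
clearbody c; split.
  have s_le_q : (s <= q)%N by rewrite qs; case: s {qs Ew Ew0} => // s; rewrite leq_pmulr.
  by case: eps1 Ew => -> Ew; [left | right]; apply/dvdnP; exists (c 1%N); lia.
exists eps; split=> //; rewrite wE; split=> // u /andP[u_gt0 ut].
by rewrite wE c_const // u_gt0 /=; lia.
Qed.
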